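(* Every disconnected graph $H$ is the $\operatorname{IR}$-graph of infinitely many graphs; that is, there are infinitely many (pairwise non-isomorphic) graphs $G$ with $G(\operatorname{IR})\cong H$.
   Context: All graphs are finite and simple. For a graph $G=(V,E)$, $D\subseteq V$ and $v\in D$, $\operatorname{PN}(v,D)=N[v]-N[D-\{v\}]$ (closed neighbourhoods). $D$ is irredundant if $\operatorname{PN}(v,D)\neq\varnothing$ for all $v\in D$; $\operatorname{IR}(G)$ is the maximum cardinality of an irredundant set and an $\operatorname{IR}(G)$-set is an irredundant set of cardinality $\operatorname{IR}(G)$. The $\operatorname{IR}$-graph $G(\operatorname{IR})$ has the $\operatorname{IR}(G)$-sets as vertices, with $D\sim D'$ iff there exist $u\in D$, $v\in D'$, $uv\in E(G)$, with $D'=(D-\{u\})\cup\{v\}$. *)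

From mathcomp Require Import all_boot.
Set Implicit Arguments. Unset Strict Implicit. Unset Printing Implicit Defensive.

Record sgraph := SGraph {
  vert : finType;
  adj : rel vert;
  adj_sym : symmetric adj;
  adj_irr : irreflexive adj }.

Section IR.
Variable G : sgraph.
Local Notation V := (vert G).

Definition cnbh (v : V) : {set V} := [set w | (w == v) || adj v w].
Definition cnbhS (S : {set V}) : {set V} := \bigcup_(v in S) cnbh v.

Definition PN (v : V) (D : {set V}) : {set V} := cnbh v :\: cnbhS (D :\ v).

Definition irredundant (D : {set V}) : bool := [forall v in D, PN v D != set0].

Definition IRnum : nat := \max_(D : {set V} | irredundant D) #|D|.

Definition IRset (D : {set V}) : bool := irredundant D && (#|D| == IRnum).

Definition IRvert : Type := {D : {set V} | IRset D}.

Definition IRadj : rel IRvert := fun D D' =>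
  [exists u in val D, exists v in val D',
     adj u v && (val D' == (val D :\ u) :|: [set v])].
End IR.

Definition disconnected (H : sgraph) : Prop :=
  exists x y : vert H, ~~ connect (@adj H) x y.

Definition rel_iso (T1 T2 : finType) (r1 : rel T1) (r2 : rel T2) : Prop :=
  exists f : T1 -> T2, bijective f /\ forall x y, r1 x y = r2 (f x) (f y).

Definition graph_iso (G1 G2 : sgraph) : Prop := rel_iso (@adj G1) (@adj G2).

From mathcomp Require Import all_boot zify.
Set Implicit Arguments. Unset Strict Implicit. Unset Printing Implicit Defensive.

(* Split V(H) into two nonempty unions of components, [side v = false] and
   [side v = true], and attach two cliques C_b = {(b, 0), ..., (b, k)}: a vertex
   v of H is joined to all of C_(side v) and to (~~ side v, 0), and (false, i) is
   joined to (true, i) for i != 0.  If an irredundant set contains two vertices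
   (b, i), (b, j) of C_b with i != 0, the only possible private neighbour of
   (b, i) is (~~ b, i), which confines the set to C_b plus at most one vertex of
   H on side b.  Otherwise the set meets each clique at most once, so it has at
   most |V(H)| + 2 elements.  Hence for k > |V(H)| the IR-sets are exactly the
   sets {v} ∪ C_(side v), and two of them are related by a swap along an edge
   precisely when their vertices of H are adjacent: G(IR) ≅ H, and different k
   give graphs of different orders. *)

Lemma rel_iso_sym (T1 T2 : finType) (r1 : rel T1) (r2 : rel T2) :
  rel_iso r1 r2 -> rel_iso r2 r1.
Proof.
move=> [f [[g fK gK] r12]]; exists g; split; first by exists f.
by move=> x y; rewrite r12 !gK.
Qed.

Lemma graph_iso_card (G1 G2 : sgraph) : graph_iso G1 G2 -> #|vert G1| = #|vert G2|.
Proof. by move=> [f [/bij_eq_card]]. Qed.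

Section Irredundance.
Variable G : sgraph.
Implicit Types (v w z : vert G) (D S : {set vert G}).

Lemma in_cnbh v w : (w \in cnbh v) = (w == v) || adj v w.
Proof. by rewrite inE. Qed.

Lemma irredundantP D :
  reflect (forall v, v \in D ->
             exists2 w, w \in cnbh v & forall z, z \in D -> z != v -> w \notin cnbh z)
          (irredundant D).
Proof.
apply: (iffP forallP) => [irrD v vD | privD v]; last first.
  apply/implyP => vD; have [w wv w_priv] := privD v vD.
  apply/set0Pn; exists w; rewrite in_setD wv andbT.
  by apply/bigcupP => -[z /setD1P [zv zD]]; apply/negP; exact: w_priv.
have /set0Pn [w] := implyP (irrD v) vD; rewrite in_setD => /andP [w_out wv].
exists w => // z zD zv; apply: contra w_out => wz.
by apply/bigcupP; exists z => //; rewrite !inE zv.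
Qed.

Lemma IRnum_eq n D :
  irredundant D -> #|D| = n -> (forall S, irredundant S -> #|S| <= n) -> IRnum G = n.
Proof.
move=> irrD <- le_n; apply/eqP; rewrite eqn_leq; apply/andP; split.
  exact/bigmax_leqP.
exact: (@leq_bigmax_cond _ (@irredundant G) (fun S => #|S|) _ irrD).
Qed.

End Irredundance.

Section CliqueExtension.
Variables (H : sgraph) (side : vert H -> bool) (k : nat).

Definition ext_vert : finType := (vert H + bool * 'I_k.+1)%type.

Definition ext_adj (a b : ext_vert) : bool :=
  match a, b with
  | inl u, inl v => adj u v
  | inl v, inr (c, i) | inr (c, i), inl v => (c == side v) || (i == ord0)
  | inr (c, i), inr (c', j) => if c == c' then i != j else (i == j) && (i != ord0)
  end.

Lemma ext_adj_sym : symmetric ext_adj.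
Proof.
case=> [u|[b i]] [v|[b' j]] //=; first exact: adj_sym.
by rewrite (eq_sym b') (eq_sym j); case: (i =P j) => [->|].
Qed.

Lemma ext_adj_irr : irreflexive ext_adj.
Proof. by case=> [u|[b i]] /=; [exact: adj_irr | rewrite !eqxx]. Qed.

Definition clique_ext : sgraph := SGraph ext_adj_sym ext_adj_irr.

Lemma card_clique_ext : #|vert clique_ext| = #|vert H| + 2 * k.+1.
Proof. by rewrite card_sum card_prod card_bool card_ord. Qed.

End CliqueExtension.

Section CliqueExtensionIR.
Variables (H : sgraph) (side : vert H -> bool) (k : nat).
Hypothesis side_adj : forall u v, adj u v -> side u = side v.
Hypothesis side_surj : forall b, exists v, side v = b.
Local Notation G := (clique_ext side k).
Implicit Types (u v : vert H) (S : {set vert G}) (z : vert G).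

Definition clique b : {set vert G} := [set inr (b, i) | i : 'I_k.+1].
Definition IRset_of v : {set vert G} := inl v |: clique (side v).

Definition ext_side z : bool := match z with inl u => side u | inr (b, _) => b end.

Lemma in_clique b z : (z \in clique b) = if z is inr (c, _) then c == b else false.
Proof.
apply/imsetP/idP => [[i _ ->] // | ].
by case: z => [//|[c i]] /eqP ->; exists i.
Qed.

Lemma card_clique b : #|clique b| = k.+1.
Proof. by rewrite card_imset ?card_ord // => i j []. Qed.

Lemma inl_IRset_of u v : (inl u \in IRset_of v) = (u == v).
Proof. by rewrite in_setU1 in_clique orbF (inj_eq inl_inj). Qed.

Lemma card_IRset_of v : #|IRset_of v| = k.+2.
Proof. by rewrite cardsU1 card_clique in_clique. Qed.

Lemma IRset_of_irredundant v : irredundant (IRset_of v).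
Proof.
apply/irredundantP => z; rewrite in_setU1 => /predU1P [-> | ].
  exists (inr (~~ side v, ord0)); first by rewrite in_cnbh /= eqxx orbT.
  move=> z' /setU1P [-> /eqP // | /imsetP [j _ ->] _].
  by rewrite in_cnbh /=; case: (side v) => /=; rewrite ?andbN.
move=> /imsetP [i _ ->].
have [-> | i0] := eqVneq i ord0.
  have [u su] := side_surj (~~ side v).
  exists (inl u); first by rewrite in_cnbh /= eqxx orbT.
  move=> z' /setU1P [-> _ | /imsetP [j _ ->] ji]; rewrite in_cnbh /=.
    rewrite (inj_eq inl_inj); apply/negP => /orP [/eqP uv | /side_adj svu].
      by move: su; rewrite uv; case: (side v).
    by move: su; rewrite svu; case: (side u).
  move: ji; rewrite su (inj_eq inr_inj) xpair_eqE eqxx /= => /negbTE ->.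
  by case: (side v).
exists (inr (~~ side v, i)).
  by rewrite in_cnbh; case: (side v); rewrite /= eqxx i0.
move=> z' /setU1P [-> _ | /imsetP [j _ ->] ji]; rewrite in_cnbh /=.
  by case: (side v); rewrite /= (negbTE i0).
move: ji; rewrite !(inj_eq inr_inj) !xpair_eqE eqxx /= => /negbTE ji.
by case: (side v); rewrite /= ji.
Qed.

Section CliquePair.
Variables (S : {set vert G}) (b : bool) (i j : 'I_k.+1).
Hypotheses (irrS : irredundant S) (iS : inr (b, i) \in S) (jS : inr (b, j) \in S).
Hypotheses (ji : j != i) (i0 : i != ord0).

Lemma clique_pair_private z :
  z \in S -> z != inr (b, i) -> (inr (~~ b, i) : vert G) \notin cnbh z.
Proof.
have [w wi w_priv] := irredundantP _ irrS _ iS.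
suff <- : w = inr (~~ b, i) by exact: w_priv.
have ji' : inr (b, j) != inr (b, i) :> vert G.
  by rewrite (inj_eq inr_inj) xpair_eqE eqxx.
move: wi (w_priv _ jS ji'); rewrite !in_cnbh; case: w {w_priv} => [u | [c l]] /=.
  by rewrite (negbTE i0) orbF => ->.
rewrite !(inj_eq inr_inj) !xpair_eqE; have [<- | /negbTE cb] := eqVneq c b.
  by rewrite /= (eq_sym j) orbN.
rewrite /= => /andP [/eqP <- _] _.
by move: cb; case: b; case: c.
Qed.

Lemma clique_pair_side z : z \in S -> ext_side z = b.
Proof.
have [-> // | zi zS] := eqVneq z (inr (b, i)).
move: (clique_pair_private zS zi); rewrite in_cnbh; case: z {zS zi} => [u | [c l]] /=.
  by rewrite (negbTE i0) orbF; case: b; case: (side u).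
by rewrite (inj_eq inr_inj) xpair_eqE; case: b; case: c; rewrite //= eq_sym orbN.
Qed.

End CliquePair.

Lemma irredundant_inl_unique S b i u v :
  irredundant S -> inr (b, i) \in S -> inl u \in S -> inl v \in S -> side u = b -> u = v.
Proof.
move=> irrS iS uS vS su; apply/eqP; apply: contraT => uv.
have [w wu w_priv] := irredundantP _ irrS _ uS.
have vu : inl v != inl u :> vert G by rewrite (inj_eq inl_inj) eq_sym.
move: wu (w_priv _ iS isT) (w_priv _ vS vu); rewrite !in_cnbh.
case: w {w_priv} => [t | [c l]] /=.
  by rewrite (inj_eq inl_inj) => /predU1P [-> | /side_adj <-]; rewrite su eqxx.
rewrite su => cbl wi /norP [_ l0]; case/negP: wi; move: cbl.
rewrite (negbTE l0) orbF => /eqP ->.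
by rewrite (inj_eq inr_inj) xpair_eqE !eqxx /= eq_sym orbN.
Qed.

Lemma irredundant_clique_pair_sub S b :
  irredundant S -> 1 < #|S :&: clique b| -> exists v, S \subset IRset_of v.
Proof.
move=> irrS /card_gt1P [x [y [/setIP [xS /imsetP [i1 _ xi]] /setIP [yS /imsetP [j1 _ yj]] xy]]].
subst x y.
have [i [j [iS jS ji i0]]] :
    exists i j, [/\ inr (b, i) \in S, inr (b, j) \in S, j != i & i != ord0].
  have i1j1 : i1 != j1 by apply: contraNneq xy => ->.
  have [i10 | ] := eqVneq i1 ord0; last by exists i1, j1; rewrite eq_sym.
  by exists j1, i1; split; rewrite // -i10 eq_sym.
have side_b := clique_pair_side irrS iS jS ji i0.
have [v [sv v_uniq]] : exists v, side v = b /\ forall u, inl u \in S -> u = v.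
  case: (pickP (fun v => inl v \in S)) => [v vS | noinl].
    exists v; split; first exact: side_b vS.
    by move=> u uS; apply: irredundant_inl_unique irrS iS uS vS (side_b _ uS).
  by have [v sv] := side_surj b; exists v; split => // u; rewrite noinl.
exists v; apply/subsetP => -[u | [c l]] zS; first by rewrite (v_uniq _ zS) inl_IRset_of.
by rewrite in_setU1 in_clique /= sv -(side_b _ zS) eqxx.
Qed.

Lemma card_clique_sparse S : (forall b, #|S :&: clique b| <= 1) -> #|S| <= #|vert H| + 2.
Proof.
move=> le1.
have sub : S \subset (inl @: [set: vert H]) :|: (S :&: clique false) :|: (S :&: clique true).
  apply/subsetP => -[u | [[] i]] zS; rewrite !in_setU !in_setI zS ?in_clique ?orbT //.
  by rewrite imset_f ?in_setT.
apply: (leq_trans (subset_leq_card sub)); rewrite -[2]/(1 + 1) addnA.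
apply: (leq_trans (leq_card_setU _ _).1); apply: leq_add (le1 true).
apply: (leq_trans (leq_card_setU _ _).1); apply: leq_add (le1 false).
by rewrite (leq_trans (leq_imset_card _ _)) ?cardsT.
Qed.

Lemma IRset_of_swap u v :
  [exists a in IRset_of u, exists b in IRset_of v,
     adj a b && (IRset_of v == (IRset_of u :\ a) :|: [set b])] = adj u v.
Proof.
apply/idP/idP => [ | uv].
  case/existsP => a /andP [au /existsP [b /andP [bv /andP [ab /eqP swap]]]].
  have a_b : a != b by apply: contraTneq ab => ->; rewrite adj_irr.
  have u_v : u != v.
    apply: contraNneq a_b => uv; move: au; rewrite uv swap.
    by rewrite in_setU in_setD1 eqxx in_set1 /= => ->.
  have a_u : a = inl u.
    have : inl u \notin IRset_of v by rewrite inl_IRset_of.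
    by rewrite swap in_setU in_setD1 inl_IRset_of eqxx andbT => /norP [/negPn /eqP].
  have b_v : b = inl v.
    have : inl v \in IRset_of v by rewrite inl_IRset_of.
    rewrite swap in_setU in_setD1 inl_IRset_of (eq_sym v) (negbTE u_v) andbF.
    by rewrite in_set1 => /eqP.
  by move: ab; rewrite a_u b_v.
apply/existsP; exists (inl u); rewrite inl_IRset_of eqxx /=.
apply/existsP; exists (inl v); rewrite inl_IRset_of eqxx uv /=.
by rewrite /IRset_of setU1K ?in_clique // (side_adj uv) setUC.
Qed.

Hypothesis k_big : #|vert H| < k.

Lemma irredundant_small_or_sub S :
  irredundant S -> #|S| < k.+2 \/ exists v, S \subset IRset_of v.
Proof.
move=> irrS; case: (ltnP 1 #|S :&: clique false|) => [gt1 | le_f].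
  by right; exact: irredundant_clique_pair_sub gt1.
case: (ltnP 1 #|S :&: clique true|) => [gt1 | le_t].
  by right; exact: irredundant_clique_pair_sub gt1.
left; apply: leq_ltn_trans (card_clique_sparse _) _ => [[] // | ].
by rewrite -[k.+2]addn2 ltn_add2r.
Qed.

Lemma IRnum_clique_ext : IRnum G = k.+2.
Proof.
have [v _] := side_surj true.
apply: IRnum_eq (IRset_of_irredundant v) (card_IRset_of v) _ => S.
by case/irredundant_small_or_sub => [/ltnW // | [u /subset_leq_card]]; rewrite card_IRset_of.
Qed.

Lemma IRset_of_IRset v : IRset (IRset_of v).
Proof. by rewrite /IRset IRset_of_irredundant card_IRset_of IRnum_clique_ext eqxx. Qed.

Lemma IRset_clique_ext S : IRset S -> exists v, S = IRset_of v.
Proof.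
case/andP => irrS; rewrite IRnum_clique_ext => /eqP cardS.
have [|[v sub]] := irredundant_small_or_sub irrS; first by rewrite cardS ltnn.
by exists v; apply/eqP; rewrite eqEcard sub card_IRset_of cardS leqnn.
Qed.

Lemma IRgraph_clique_ext : rel_iso (@IRadj G) (@adj H).
Proof.
pose g v : IRvert G := exist _ (IRset_of v) (IRset_of_IRset v).
have g_inj : injective g.
  by move=> u v /(congr1 val) /= uv; apply/eqP; rewrite -inl_IRset_of -uv inl_IRset_of.
have g_onto D : D \in codom g.
  by have [v Dv] := IRset_clique_ext (valP D); apply/codomP; exists v; apply: val_inj.
apply: rel_iso_sym; exists g; split.
  by exists (fun D => iinv (g_onto D)) => [v | D]; rewrite ?iinv_f ?f_iinv.
by move=> u v; rewrite /IRadj /= IRset_of_swap.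
Qed.

End CliqueExtensionIR.

Unset Implicit Arguments.

Theorem theorem3p1 (H : sgraph) :
  disconnected H ->
  exists F : nat -> sgraph,
    (forall i, rel_iso (@IRadj (F i)) (@adj H)) /\
    (forall i j, i <> j -> ~ graph_iso (F i) (F j)).
Proof.
move=> [x [y not_xy]].
pose side v := ~~ connect (@adj H) x v.
have side_adj u v : adj u v -> side u = side v.
  by move=> uv; rewrite /side (same_connect_r (sym_connect_sym (@adj_sym H)) (connect1 uv)).
have side_surj b : exists v, side v = b.
  by case: b; [exists y | exists x; rewrite /side connect0].
exists (fun i => clique_ext side (#|vert H|.+1 + i)); split => [i | i j ij /graph_iso_card].
  by apply: IRgraph_clique_ext; rewrite // ltnS leq_addr.
by rewrite !card_clique_ext; lia.
Qed.
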